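(* Let $G_L\le GL(7,\mathbb{C})$ be the group generated by the permutation matrices $(12),(23),(34),(67)$ and the matrix $A$ defined in the context. Then $G_L$ is isomorphic to the Coxeter group $W(D_5)$, which has order $1920$.
   Context: A permutation $\sigma\in S_7$ is identified with the $7\times7$ permutation matrix sending the standard basis vector $e_i$ to $e_{\sigma(i)}$. The matrix $A\in GL(7,\mathbb{C})$ is \[ A=\begin{pmatrix} 1&0&0&0&0&0&0\\ 0&1&0&0&0&0&0\\ 0&0&-1&0&0&0&1\\ 0&0&0&-1&0&0&1\\ 0&0&-1&-1&1&0&1\\ 0&0&-1&-1&0&1&1\\ 0&0&0&0&0&0&1 \end{pmatrix}. \] $W(D_5)$ denotes the Coxeter group of type $D_5$. *)

From mathcomp Require Import all_boot all_order all_algebra all_fingroup all_field.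
Set Implicit Arguments. Unset Strict Implicit. Unset Printing Implicit Defensive.
Import GRing.Theory Num.Theory.
Local Open Scope ring_scope.

(* Matrices over the complex numbers: we use algC (algebraic complex numbers);
   all matrices involved have integer entries. *)

(* Permutation matrix of s : 'S_n, sending e_i to e_(s i):
   column i has its single 1 in row (s i). *)
Definition permM (n : nat) (s : 'S_n) : 'M[algC]_n :=
  \matrix_(r, c) (r == s c)%:R.

Definition mx_of_rows (n : nat) (rows : seq (seq int)) : 'M[algC]_n :=
  \matrix_(i, j) ((nth 0%Z (nth [::] rows i) j)%:~R).

(* The matrix A of the context (rows 1..7 correspond to indices 0..6). *)
Definition A7 : 'M[algC]_7 := mx_of_rows 7
  [:: [:: 1; 0; 0; 0; 0; 0; 0];
      [:: 0; 1; 0; 0; 0; 0; 0];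
      [:: 0; 0; -1; 0; 0; 0; 1];
      [:: 0; 0; 0; -1; 0; 0; 1];
      [:: 0; 0; -1; -1; 1; 0; 1];
      [:: 0; 0; -1; -1; 0; 1; 1];
      [:: 0; 0; 0; 0; 0; 0; 1]]%Z.

(* The transposition (a b) (1-based, as in the paper) as a 7x7 permutation matrix. *)
Definition tr7 (a b : nat) : 'M[algC]_7 := permM (tperm (inord a.-1 : 'I_7) (inord b.-1)).

Inductive generated (n : nat) (S : seq 'M[algC]_n) : 'M[algC]_n -> Prop :=
  | gen_one : generated S 1%:M
  | gen_gen x : x \in S -> generated S x
  | gen_mul x y : generated S x -> generated S y -> generated S (x *m y)
  | gen_inv x : generated S x -> generated S (invmx x).

Definition GL_gens : seq 'M[algC]_7 :=
  [:: tr7 1 2; tr7 2 3; tr7 3 4; tr7 6 7; A7].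

Definition G_L : 'M[algC]_7 -> Prop := generated GL_gens.

(* The Coxeter group W(D_5), realized (as the Weyl group of the root system D_5)
   as the reflection group in R^5 (here over algC) generated by the reflections
   s_alpha = I - alpha alpha^T (alpha of squared length 2) in the simple roots
   e1-e2, e2-e3, e3-e4, e4-e5, e4+e5. *)
Definition refl5 (alpha : 'cV[algC]_5) : 'M[algC]_5 := 1%:M - alpha *m alpha^T.

Definition vec5 (l : seq int) : 'cV[algC]_5 := \col_i ((nth 0%Z l i)%:~R).

Definition D5_simple_roots : seq 'cV[algC]_5 :=
  [:: vec5 [:: 1; -1; 0; 0; 0]; vec5 [:: 0; 1; -1; 0; 0]; vec5 [:: 0; 0; 1; -1; 0];
      vec5 [:: 0; 0; 0; 1; -1]; vec5 [:: 0; 0; 0; 1; 1]]%Z.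

Definition WD5 : 'M[algC]_5 -> Prop := generated (map refl5 D5_simple_roots).

Definition mx_group_isomorphic (m n : nat)
  (G : 'M[algC]_m -> Prop) (H : 'M[algC]_n -> Prop) : Prop :=
  exists f : 'M[algC]_m -> 'M[algC]_n,
    [/\ (forall x, G x -> H (f x)),
        (forall x y, G x -> G y -> f (x *m y) = f x *m f y),
        (forall x y, G x -> G y -> f x = f y -> x = y)
      & (forall y, H y -> exists2 x, G x & f x = y)].

Definition mx_group_order (n : nat) (G : 'M[algC]_n -> Prop) (k : nat) : Prop :=
  exists s : seq 'M[algC]_n, [/\ uniq s, size s = k & forall x, G x <-> x \in s].

(* Send the generators (12), (23), (34), (67), A of G_L to the involutions
   s1, s2, s_(e1+e2), s4, s_(e1+e2) s3 of W(D5), where s1, ..., s5 are the simple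
   reflections.  A breadth-first search in GL_7 x GL_5 enumerates the group generated
   by the five pairs: it has 1920 elements, is closed under right multiplication by
   the pairs, and both coordinate projections are injective on it.  As all generators
   are involutions, every element of either generated group is a word in its
   generators, so this list is the graph of an isomorphism from G_L onto the group
   generated by the images.  That group is W(D5): the images are words in the simple
   reflections, and every simple reflection occurs as a second coordinate. *)

From Stdlib Require Import NArith.
From mathcomp Require Import all_boot all_order all_algebra all_fingroup all_field.
Set Implicit Arguments. Unset Strict Implicit. Unset Printing Implicit Defensive.
Import GRing.Theory.

Section MatrixWords.
Local Open Scope ring_scope.
Variable n : nat.
Implicit Types (S T : seq 'M[algC]_n) (w : seq nat).

Definition mxword S w : 'M[algC]_n := foldr (fun i x => nth 1%:M S i *m x) 1%:M w.

Lemma mxword_cat S w1 w2 : mxword S (w1 ++ w2) = mxword S w1 *m mxword S w2.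
Proof. by elim: w1 => [|i w1 IH] /=; rewrite ?mul1mx // IH mulmxA. Qed.

Lemma mxword_rcons S w i : mxword S (rcons w i) = mxword S w *m nth 1%:M S i.
Proof. by rewrite -cats1 mxword_cat /= mulmx1. Qed.

Lemma generated_mxword S w : generated S (mxword S w).
Proof.
elim: w => [|i w IH] /=; first exact: gen_one.
apply: gen_mul IH; case: (ltnP i (size S)) => [iS|Si].
  by apply: gen_gen; rewrite mem_nth.
by rewrite nth_default //; exact: gen_one.
Qed.

Lemma generated_sub S T x :
  (forall s, s \in S -> generated T s) -> generated S x -> generated T x.
Proof.
move=> ST; elim=> {x} [|x /ST //|x y _ Tx _ Ty|x _ Tx]; first exact: gen_one.
  exact: gen_mul.
exact: gen_inv.
Qed.

Section Involutions.
Variable S : seq 'M[algC]_n.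
Hypothesis S_invol : forall s, s \in S -> s *m s = 1%:M.

Lemma mxword_rev w : mxword S w *m mxword S (rev w) = 1%:M.
Proof.
elim: w => [|i w IH] /=; first by rewrite mulmx1.
rewrite rev_cons mxword_rcons -mulmxA (mulmxA (mxword S w)) IH mul1mx.
case: (ltnP i (size S)) => [iS|Si]; first by rewrite S_invol ?mem_nth.
by rewrite nth_default // mulmx1.
Qed.

Lemma generated_mxwordP x : generated S x <-> exists w, x = mxword S w.
Proof.
split=> [|[w ->]]; last exact: generated_mxword.
elim=> {x} [|x Sx|x y _ [u ->] _ [v ->]|x _ [w ->]].
- by exists [::].
- by exists [:: index x S]; rewrite /= nth_index // mulmx1.
- by exists (u ++ v); rewrite mxword_cat.
- have ww' := mxword_rev w; have [Uw _] := mulmx1_unit ww'.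
  by exists (rev w); rewrite -[LHS]mulmx1 -ww' mulmxA mulVmx // mul1mx.
Qed.

End Involutions.
End MatrixWords.

Lemma mx_group_isomorphic_eqr m n (G : 'M[algC]_m -> Prop) (H K : 'M[algC]_n -> Prop) :
  (forall y, H y <-> K y) -> mx_group_isomorphic G H -> mx_group_isomorphic G K.
Proof.
move=> HK [f [fGH fM f_inj f_surj]]; exists f; split=> // [x /fGH /HK //|y /HK].
exact: f_surj.
Qed.

Lemma mx_group_order_eq n (H K : 'M[algC]_n -> Prop) k :
  (forall y, H y <-> K y) -> mx_group_order H k -> mx_group_order K k.
Proof. by move=> HK [s [us sk Hs]]; exists s; split=> // y; rewrite -HK. Qed.

Lemma uniq_map_inj_in (T U : eqType) (f : T -> U) (s : seq T) :
  uniq (map f s) -> {in s &, injective f}.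
Proof.
elim: s => [|z s IH] //= /andP[fz_s /IH{}IH] x y.
rewrite !inE => /predU1P[->|xs] /predU1P[->|ys] // fxy.
- by move: fz_s; rewrite fxy map_f.
- by move: fz_s; rewrite -fxy map_f.
exact: IH.
Qed.

Section WordGraph.
Local Open Scope ring_scope.
Variables (m n : nat) (S1 : seq 'M[algC]_m) (S2 : seq 'M[algC]_n).
Variable P : seq ('M[algC]_m * 'M[algC]_n).
Hypothesis S1_invol : forall s, s \in S1 -> s *m s = 1%:M.
Hypothesis S2_invol : forall s, s \in S2 -> s *m s = 1%:M.
Hypothesis P1 : (1%:M, 1%:M) \in P.
Hypothesis P_closed :
  forall p i, p \in P -> (p.1 *m nth 1%:M S1 i, p.2 *m nth 1%:M S2 i) \in P.
Hypothesis P_words : forall p, p \in P -> exists w, p = (mxword S1 w, mxword S2 w).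
Hypothesis P_uniq1 : uniq (map fst P).
Hypothesis P_uniq2 : uniq (map snd P).

Lemma mxword_pair_in w : (mxword S1 w, mxword S2 w) \in P.
Proof.
elim/last_ind: w => [|w i IH]; first exact: P1.
by rewrite !mxword_rcons; exact: P_closed _ i IH.
Qed.

Lemma generated_snd y : generated S2 y <-> y \in map snd P.
Proof.
rewrite generated_mxwordP //; split=> [[w ->]|/mapP[p /P_words[w ->] ->]].
  by rewrite (map_f snd (mxword_pair_in w)).
by exists w.
Qed.

Definition graph_fun x := nth 1%:M (map snd P) (index x (map fst P)).

Lemma graph_funE x y : (x, y) \in P -> graph_fun x = y.
Proof.
move=> xyP; set i := index x (map fst P).
have ltiP : (i < size P)%N by rewrite -(size_map fst) index_mem (map_f fst xyP).
have ith_pair : nth (1%:M, 1%:M) P i = (x, y).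
  apply: (uniq_map_inj_in P_uniq1) => //; first exact: mem_nth.
  by rewrite /= -(nth_map _ 1%:M) // nth_index // (map_f fst xyP).
by rewrite /graph_fun (nth_map (1%:M, 1%:M)) // ith_pair.
Qed.

Lemma graph_fun_mxword w : graph_fun (mxword S1 w) = mxword S2 w.
Proof. exact/graph_funE/mxword_pair_in. Qed.

Lemma graph_isomorphic : mx_group_isomorphic (generated S1) (generated S2).
Proof.
exists graph_fun; split.
- by move=> x /generated_mxwordP[// | w ->]; rewrite graph_fun_mxword; exact: generated_mxword.
- move=> x y /generated_mxwordP[// | u ->] /generated_mxwordP[// | v ->].
  by rewrite -mxword_cat !graph_fun_mxword mxword_cat.
- move=> x y /generated_mxwordP[// | u ->] /generated_mxwordP[// | v ->].
  rewrite !graph_fun_mxword => uv.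
  have := uniq_map_inj_in P_uniq2 (mxword_pair_in u) (mxword_pair_in v) uv.
  by case.
- move=> y /generated_mxwordP[// | w ->]; exists (mxword S1 w).
    exact: generated_mxword.
  exact: graph_fun_mxword.
Qed.

Lemma graph_order : mx_group_order (generated S2) (size P).
Proof. by exists (map snd P); rewrite size_map; split=> // y; exact: generated_snd. Qed.

End WordGraph.

Definition imx := seq (seq int).

Definition shaped (n : nat) (a : imx) := (size a == n) && all (fun r => size r == n) a.

Definition imx_one (n : nat) : imx := mkseq (fun i => mkseq (fun j => Posz (i == j)) n) n.

(* Zero coefficients are skipped: all the matrices occurring below are sparse. *)
Fixpoint row_mulmx (n : nat) (r : seq int) (b : imx) : seq int :=
  match r, b with
  | c :: r', br :: b' =>
      let s := row_mulmx n r' b' in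
      if c == 0%R then s else [seq (c * x.1 + x.2)%R | x <- zip br s]
  | _, _ => nseq n 0%R
  end.

Definition imx_mul (n : nat) (a b : imx) : imx := [seq row_mulmx n r b | r <- a].

Definition imx_word (n : nat) (S : seq imx) (w : seq nat) : imx :=
  foldr (fun i a => imx_mul n (nth (imx_one n) S i) a) (imx_one n) w.

Section IntMatrices.
Local Open Scope ring_scope.
Variable n : nat.
Implicit Types (a b : imx) (r : seq int) (S : seq imx).

Lemma size_row_mulmx r b : all (fun br => size br == n) b -> size (row_mulmx n r b) = n.
Proof.
elim: r b => [|c r IH] [|br b] /=; rewrite ?size_nseq // => /andP[/eqP brn bn].
by case: ifP => _; rewrite ?size_map ?size_zip IH // brn minnn.
Qed.

Lemma nth_row_mulmx r b j : all (fun br => size br == n) b -> (j < n)%N ->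
  nth 0 (row_mulmx n r b) j = \sum_(0 <= k < size r) nth 0 r k * nth 0 (nth [::] b k) j.
Proof.
move=> + jn; elim: r b => [|c r IH] [|br b] /=.
- by rewrite nth_nseq if_same big_geq.
- by rewrite nth_nseq if_same big_geq.
- by move=> _; rewrite nth_nseq if_same big1 // => k _; rewrite !nth_nil mulr0.
case/andP=> /eqP brn bn; rewrite big_nat_recl //= -IH //.
case: eqP => [->|_]; first by rewrite mul0r add0r.
by rewrite (nth_map (0, 0)) ?size_zip ?size_row_mulmx ?brn ?minnn // nth_zip ?size_row_mulmx.
Qed.

Lemma shaped_one : shaped n (imx_one n).
Proof.
rewrite /shaped size_mkseq eqxx /=.
by apply/allP=> _ /mapP[i _ ->]; rewrite size_mkseq.
Qed.

Lemma shaped_mul a b : shaped n a -> shaped n b -> shaped n (imx_mul n a b).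
Proof.
case/andP=> sa _ /andP[_ bn]; rewrite /shaped size_map sa /=.
by apply/allP=> _ /mapP[r _ ->]; rewrite size_row_mulmx.
Qed.

Lemma mx_of_rows_one : mx_of_rows n (imx_one n) = 1%:M.
Proof.
by apply/matrixP=> i j; rewrite !mxE /imx_one !nth_mkseq //; case: (i == j).
Qed.

Lemma mx_of_rows_mul a b : shaped n a -> shaped n b ->
  mx_of_rows n (imx_mul n a b) = mx_of_rows n a *m mx_of_rows n b.
Proof.
case/andP=> /eqP sa /allP an /andP[_ bn].
apply/matrixP=> i j; have ai : (i < size a)%N by rewrite sa.
rewrite !mxE (nth_map [::]) // nth_row_mulmx // (eqP (an _ (mem_nth [::] ai))).
by rewrite big_mkord rmorph_sum; apply: eq_bigr => k _; rewrite !mxE rmorphM.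
Qed.

Lemma mx_of_rows_inj a b : shaped n a -> shaped n b ->
  mx_of_rows n a = mx_of_rows n b -> a = b.
Proof.
case/andP=> /eqP sa /allP an /andP[/eqP sb /allP bn] /matrixP ab.
apply: (@eq_from_nth _ [::]) => [|i]; first by rewrite sa sb.
rewrite sa => lt_in; have ai : (i < size a)%N by rewrite sa.
have bi : (i < size b)%N by rewrite sb.
have /eqP sai := an _ (mem_nth [::] ai); have /eqP sbi := bn _ (mem_nth [::] bi).
apply: (@eq_from_nth _ 0%R) => [|j]; first by rewrite sai sbi.
rewrite sai => lt_jn; have := ab (Ordinal lt_in) (Ordinal lt_jn); rewrite !mxE.
exact: intr_inj.
Qed.

Lemma shaped_nth S i : all (shaped n) S -> shaped n (nth (imx_one n) S i).
Proof.
move=> /allP Sn; case: (ltnP i (size S)) => iS; first exact/Sn/mem_nth.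
by rewrite nth_default // shaped_one.
Qed.

Lemma mx_of_rows_nth S i :
  mx_of_rows n (nth (imx_one n) S i) = nth 1%:M (map (mx_of_rows n) S) i.
Proof.
case: (ltnP i (size S)) => iS; first by rewrite (nth_map (imx_one n)).
by rewrite !nth_default ?size_map // mx_of_rows_one.
Qed.

Lemma shaped_word S w : all (shaped n) S -> shaped n (imx_word n S w).
Proof.
move=> Sn; elim: w => [|i w IH] /=; first exact: shaped_one.
exact/shaped_mul/IH/shaped_nth.
Qed.

Lemma mx_of_rows_word S w : all (shaped n) S ->
  mx_of_rows n (imx_word n S w) = mxword (map (mx_of_rows n) S) w.
Proof.
move=> Sn; elim: w => [|i w IH] /=; first exact: mx_of_rows_one.
by rewrite mx_of_rows_mul ?shaped_nth ?shaped_word // IH mx_of_rows_nth.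
Qed.

End IntMatrices.

Definition int_code (x : int) : N :=
  match x with Posz k => N.of_nat k.*2 | Negz k => N.of_nat k.*2.+1 end.

(* Base-8 digits of the entries.  Injectivity (for entries in [-4, 3]) is needed for
   the checks below to succeed, never for their soundness. *)
Definition imx_key (a : imx) : N :=
  foldl (fun h x => 8 * h + int_code x)%num 0%num (flatten a).

Lemma uniq_sorted_keys (s : seq N) : sorted N.ltb (sort N.leb s) -> uniq s.
Proof.
rewrite -(perm_uniq (permEl (perm_sort N.leb s))); apply: sorted_uniq.
  by move=> y x z /N.ltb_lt xy /N.ltb_lt yz; apply/N.ltb_lt/(N.lt_trans _ _ _ xy yz).
exact: N.ltb_irrefl.
Qed.

Lemma uniq_mx_of_rows k (s : seq imx) : {in s, forall a, shaped k a} ->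
  sorted N.ltb (sort N.leb (map imx_key s)) -> uniq (map (mx_of_rows k) s).
Proof.
move=> sk /uniq_sorted_keys/map_uniq us.
by rewrite map_inj_in_uniq // => a b /sk ak /sk bk; exact: mx_of_rows_inj.
Qed.

Section KeyedSearch.
Variables (T : eqType) (key : T -> N) (act : T -> T -> T) (gens : seq T).

Definition keyed (s : seq T) : seq (N * T) := [seq (key x, x) | x <- s].

Definition key_le (p q : N * T) := N.leb p.1 q.1.

Definition sort_by_key (s : seq T) : seq T := map snd (sort key_le (keyed s)).

Fixpoint undup_keyed (s : seq (N * T)) : seq (N * T) :=
  if s is p :: s' then
    if s' is q :: _ then (if N.eqb p.1 q.1 then undup_keyed s' else p :: undup_keyed s')
    else s
  else [::].

Fixpoint diff_keyed (s t : seq (N * T)) : seq (N * T) :=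
  if s is p :: s' then
    let fix skip t :=
      if t is q :: t' then
        if N.ltb q.1 p.1 then skip t'
        else if N.eqb q.1 p.1 then diff_keyed s' t else p :: diff_keyed s' t
      else s
    in skip t
  else [::].

(* Only the invariant [orbit_bfs_ind] is proved about this search; that its output is
   closed under [gens] is checked a posteriori. *)
Fixpoint orbit_bfs (rounds : nat) (seen frontier : seq (N * T)) : seq (N * T) :=
  if rounds is k.+1 then
    let new := diff_keyed (undup_keyed (sort key_le
                 (keyed [seq act p.2 g | p <- frontier, g <- gens]))) seen in
    orbit_bfs k (merge key_le seen new) new
  else seen.

Definition orbit_search (rounds : nat) (x : T) : seq T :=
  map snd (orbit_bfs rounds (keyed [:: x]) (keyed [:: x])).

Lemma perm_sort_by_key s : perm_eq (sort_by_key s) s.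
Proof.
have {2}-> : s = map snd (keyed s) by elim: s => //= x s <-.
exact/perm_map/permEl/perm_sort.
Qed.

Lemma mem_undup_keyed s : {subset undup_keyed s <= s}.
Proof.
elim: s => [|p [|q s] IH] //= x.
case: ifP => _; first by move/IH => xs; rewrite inE xs orbT.
by rewrite inE => /predU1P[->|/IH xs]; rewrite inE ?eqxx ?xs ?orbT.
Qed.

Lemma mem_diff_keyed s t : {subset diff_keyed s t <= s}.
Proof.
elim: s t => [|p s IH] t //=; elim: t => [|q t IHt] //=.
case: ifP => _; first exact: IHt.
case: ifP => _ x; first by move/IH => xs; rewrite inE xs orbT.
by rewrite inE => /predU1P[->|/IH xs]; rewrite inE ?eqxx ?xs ?orbT.
Qed.

Lemma orbit_bfs_ind (P : T -> Prop) rounds seen frontier :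
  (forall y g, P y -> g \in gens -> P (act y g)) ->
  {in seen, forall p, P p.2} -> {in frontier, forall p, P p.2} ->
  {in orbit_bfs rounds seen frontier, forall p, P p.2}.
Proof.
move=> Pact; elim: rounds seen frontier => [|k IH] seen frontier //= Pseen Pfr.
set new := diff_keyed _ seen.
have Pnew : {in new, forall p, P p.2}.
  move=> p /mem_diff_keyed/mem_undup_keyed; rewrite mem_sort.
  case/mapP=> _ /allpairsP[[q g] /= [qf gg ->]] ->.
  exact: Pact (Pfr q qf) gg.
apply: IH => // p; rewrite mem_merge mem_cat => /orP[]; [exact: Pseen | exact: Pnew].
Qed.

Lemma orbit_search_ind (P : T -> Prop) rounds x :
  P x -> (forall y g, P y -> g \in gens -> P (act y g)) ->
  {in orbit_search rounds x, forall y, P y}.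
Proof.
move=> Px Pact _ /mapP[p + ->]; apply: orbit_bfs_ind => // q; rewrite inE => /eqP-> //.
Qed.

Lemma orbit_bfs_seen rounds seen frontier :
  {subset seen <= orbit_bfs rounds seen frontier}.
Proof.
elim: rounds seen frontier => [|k IH] seen frontier //= p ps.
by apply: IH; rewrite mem_merge mem_cat ps.
Qed.

Lemma orbit_search_start rounds x : x \in orbit_search rounds x.
Proof.
rewrite /orbit_search (_ : x = (key x, x).2) //.
by apply: map_f; apply: orbit_bfs_seen; exact: mem_head.
Qed.

End KeyedSearch.

Definition imx_tperm (n a b : nat) : imx :=
  mkseq (fun i => mkseq (fun j =>
    Posz (i == (if j == a then b else if j == b then a else j))) n) n.

Lemma mx_of_rows_tperm n a b : (a <= n)%N -> (b <= n)%N ->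
  mx_of_rows n.+1 (imx_tperm n.+1 a b) = permM (tperm (inord a : 'I_n.+1) (inord b)).
Proof.
move=> an bn; apply/matrixP=> i j; rewrite !mxE /imx_tperm !nth_mkseq //.
suff -> : (i == tperm (inord a : 'I_n.+1) (inord b) j) =
          (i == (if j == a :> nat then b else if j == b :> nat then a else j) :> nat) by [].
rewrite -(inj_eq val_inj); case: tpermP => [->|->|ja jb]; rewrite /= ?inordK ?eqxx //.
- by case: (b =P a) => [->|].
have ja' : (j == a :> nat) = false by apply/eqP=> ja'; apply: ja; rewrite -ja' inord_val.
have jb' : (j == b :> nat) = false by apply/eqP=> jb'; apply: jb; rewrite -jb' inord_val.
by rewrite ja' jb'.
Qed.

Definition imx_refl (n : nat) (l : seq int) : imx :=
  mkseq (fun i => mkseq (fun j => (Posz (i == j) - nth 0 l i * nth 0 l j)%R) n) n.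

Lemma mx_of_rows_refl l : mx_of_rows 5 (imx_refl 5 l) = refl5 (vec5 l).
Proof.
apply/matrixP=> i j; rewrite !mxE /imx_refl !nth_mkseq //.
by rewrite big_ord1 !mxE rmorphB rmorphM.
Qed.

Definition A7_rows : imx :=
  ltac:(match eval cbv delta [A7] in A7 with mx_of_rows _ ?rows => exact rows end).

Definition GL_gen_rows : seq imx :=
  [:: imx_tperm 7 0 1; imx_tperm 7 1 2; imx_tperm 7 2 3; imx_tperm 7 5 6; A7_rows].

Lemma GL_gensE : GL_gens = map (mx_of_rows 7) GL_gen_rows.
Proof. by rewrite /= !mx_of_rows_tperm. Qed.

Definition D5_root_rows : seq (seq int) :=
  [:: [:: 1; -1; 0; 0; 0]; [:: 0; 1; -1; 0; 0]; [:: 0; 0; 1; -1; 0];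
      [:: 0; 0; 0; 1; -1]; [:: 0; 0; 0; 1; 1]]%Z.

Definition D5_reflection_rows : seq imx := map (imx_refl 5) D5_root_rows.

Lemma D5_reflectionsE : map refl5 D5_simple_roots = map (mx_of_rows 5) D5_reflection_rows.
Proof.
have -> : D5_simple_roots = map vec5 D5_root_rows by [].
by rewrite -!map_comp; apply: eq_map => l /=; rewrite mx_of_rows_refl.
Qed.

(* s2 s1 s3 s2 s4 s3 maps e4 + e5 to e1 + e2, so this word (indices are 0-based) is
   the reflection in the highest root e1 + e2. *)
Definition highest_root_word : seq nat := [:: 1; 0; 2; 1; 3; 2; 4; 2; 1; 0; 3; 2; 1].

Definition D5_image_words : seq (seq nat) :=
  [:: [:: 0]; [:: 1]; highest_root_word; [:: 3]; rcons highest_root_word 2].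

Definition D5_image_rows : seq imx := map (imx_word 5 D5_reflection_rows) D5_image_words.

Definition D5_images : seq 'M[algC]_5 := map (mx_of_rows 5) D5_image_rows.

Definition pair_mul (p q : imx * imx) : imx * imx := (imx_mul 7 p.1 q.1, imx_mul 5 p.2 q.2).

Definition pair_key (p : imx * imx) : N := imx_key p.2.

Definition graph_gens : seq (imx * imx) := zip GL_gen_rows D5_image_rows.

Definition graph : seq (imx * imx) :=
  orbit_search pair_key pair_mul graph_gens 32 (imx_one 7, imx_one 5).

Definition generators_ok : bool :=
  [&& all (shaped 7) GL_gen_rows, all (shaped 5) D5_reflection_rows,
      all (fun g => imx_mul 7 g g == imx_one 7) GL_gen_rows &
      all (fun g => imx_mul 5 g g == imx_one 5) D5_image_rows].

Lemma generators_okP : generators_ok.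
Proof. by vm_compute. Qed.

Definition graph_ok (P : seq (imx * imx)) : bool :=
  let sorted_P := sort_by_key pair_key P in
  [&& size P == 1920,
      all (fun g => sort_by_key pair_key [seq pair_mul p g | p <- P] == sorted_P) graph_gens,
      sorted N.ltb (sort N.leb (map imx_key (map fst P))),
      sorted N.ltb (sort N.leb (map imx_key (map snd P))) &
      all (mem (map snd P)) D5_reflection_rows].

Lemma graph_okP : graph_ok graph.
Proof. by vm_compute. Qed.

Lemma mx_of_rows_involutive k (S : seq imx) :
  all (shaped k) S -> all (fun g => imx_mul k g g == imx_one k) S ->
  forall s, s \in map (mx_of_rows k) S -> (s *m s = 1%:M)%R.
Proof.
move=> /allP Sk /allP Sinv _ /mapP[g gS ->].
by rewrite -mx_of_rows_mul ?Sk // (eqP (Sinv g gS)) mx_of_rows_one.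
Qed.

Lemma shaped_D5_images : all (shaped 5) D5_image_rows.
Proof.
have /and4P[_ Rn _ _] := generators_okP.
by apply/allP=> _ /mapP[w _ ->]; exact: shaped_word.
Qed.

Lemma graph_gensP g : g \in graph_gens ->
  exists2 i, (i < 5)%N & g = (nth (imx_one 7) GL_gen_rows i, nth (imx_one 5) D5_image_rows i).
Proof.
case/(nthP (imx_one 7, imx_one 5)) => i; rewrite size_zip => lt_i5 <-.
by exists i => //; rewrite nth_zip.
Qed.

Definition pair_mx (p : imx * imx) := (mx_of_rows 7 p.1, mx_of_rows 5 p.2).

Definition graph_word_pair (p : imx * imx) : Prop :=
  [/\ shaped 7 p.1, shaped 5 p.2 &
      exists w, pair_mx p = (mxword GL_gens w, mxword D5_images w)].

Lemma graph_word_pairs : {in graph, forall p, graph_word_pair p}.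
Proof.
have /and4P[GLn _ _ _] := generators_okP.
apply: orbit_search_ind => [|p g [p1n p2n [w pw]] /graph_gensP[i _ ->]].
  split; try exact: shaped_one.
  by exists [::]; rewrite /pair_mx /= !mx_of_rows_one.
have [gi hi] := (shaped_nth i GLn, shaped_nth i shaped_D5_images).
split; rewrite /= ?shaped_mul //; exists (rcons w i).
case: pw => pw1 pw2; rewrite /pair_mx /= !mx_of_rows_mul // pw1 pw2 !mxword_rcons.
by rewrite !mx_of_rows_nth GL_gensE.
Qed.

Section GraphCertificate.
Local Open Scope ring_scope.
Variable P : seq (imx * imx).
Hypothesis P_ok : graph_ok P.
Hypothesis P_start : (imx_one 7, imx_one 5) \in P.
Hypothesis P_words : {in P, forall p, graph_word_pair p}.

Lemma certificate_closed p g : p \in P -> g \in graph_gens -> pair_mul p g \in P.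
Proof.
move=> pP gg; move: P_ok => /and5P[_ /allP/(_ g gg)/eqP sorted_eq _ _ _].
have := perm_sort_by_key pair_key [seq pair_mul q g | q <- P].
rewrite sorted_eq perm_sym => /perm_trans/(_ (perm_sort_by_key pair_key P))/perm_mem <-.
exact: map_f.
Qed.

Lemma certificate_mx_closed p i : p \in map pair_mx P ->
  (p.1 *m nth 1%:M GL_gens i, p.2 *m nth 1%:M D5_images i) \in map pair_mx P.
Proof.
case/mapP=> q qP ->; have [q1n q2n _] := P_words qP.
have /and4P[GLn _ _ _] := generators_okP.
have [lt_i5|le5i] := ltnP i 5; last first.
  by rewrite !nth_default ?size_map // !mulmx1 map_f.
have gg : (nth (imx_one 7) GL_gen_rows i, nth (imx_one 5) D5_image_rows i) \in graph_gens.
  by rewrite -nth_zip // mem_nth // size_zip.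
have := map_f pair_mx (certificate_closed qP gg).
rewrite /pair_mx /= !mx_of_rows_mul ?shaped_nth ?shaped_D5_images //.
by rewrite !mx_of_rows_nth GL_gensE.
Qed.

Lemma certificate_mx_words p : p \in map pair_mx P ->
  exists w, p = (mxword GL_gens w, mxword D5_images w).
Proof. by case/mapP=> q /P_words[_ _ [w qw]] ->; exists w. Qed.

Lemma certificate_uniq_fst : uniq (map fst (map pair_mx P)).
Proof.
move: P_ok => /and5P[_ _ keys1 _ _].
have -> : map fst (map pair_mx P) = map (mx_of_rows 7) (map fst P) by rewrite -!map_comp.
by apply: uniq_mx_of_rows keys1 => _ /mapP[p /P_words[p1 _ _] ->].
Qed.

Lemma certificate_uniq_snd : uniq (map snd (map pair_mx P)).
Proof.
move: P_ok => /and5P[_ _ _ keys2 _].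
have -> : map snd (map pair_mx P) = map (mx_of_rows 5) (map snd P) by rewrite -!map_comp.
by apply: uniq_mx_of_rows keys2 => _ /mapP[p /P_words[_ p2 _] ->].
Qed.

Lemma G_L_isomorphic_D5_images :
  mx_group_isomorphic G_L (generated D5_images) /\ mx_group_order (generated D5_images) 1920.
Proof.
have /and4P[GLn _ GLinv Iinv] := generators_okP.
have GL_invol : forall s, s \in GL_gens -> s *m s = 1%:M.
  by rewrite GL_gensE; exact: mx_of_rows_involutive GLn GLinv.
have D5_invol := mx_of_rows_involutive shaped_D5_images Iinv.
have one_in : (1%:M, 1%:M) \in map pair_mx P.
  by rewrite -(mx_of_rows_one 7) -(mx_of_rows_one 5); exact: (map_f pair_mx P_start).
move: P_ok => /and5P[/eqP <- _ _ _ _]; rewrite -(size_map pair_mx); split.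
  exact: graph_isomorphic GL_invol D5_invol one_in certificate_mx_closed
    certificate_uniq_fst certificate_uniq_snd.
exact: graph_order D5_invol one_in certificate_mx_closed certificate_mx_words
  certificate_uniq_snd.
Qed.

Lemma generated_D5_images y : generated D5_images y <-> WD5 y.
Proof.
have /and4P[_ Rn _ _] := generators_okP.
move: P_ok => /and5P[_ _ _ _ /allP roots_in_P].
split; apply: generated_sub => s.
  case/mapP=> _ /mapP[w _ ->] ->.
  rewrite mx_of_rows_word // -D5_reflectionsE; exact: generated_mxword.
rewrite D5_reflectionsE => /mapP[r /roots_in_P /mapP[p /P_words[_ _ [w [_ pw]]] ->] ->].
by rewrite pw; exact: generated_mxword.
Qed.

End GraphCertificate.

Theorem theorem4p1 :
  mx_group_isomorphic G_L WD5 /\ mx_group_order WD5 1920.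
Proof.
have start : (imx_one 7, imx_one 5) \in graph by exact: orbit_search_start.
have [iso ord] := G_L_isomorphic_D5_images graph_okP start graph_word_pairs.
have eqW := generated_D5_images graph_okP graph_word_pairs.
split; [exact: mx_group_isomorphic_eqr eqW iso | exact: mx_group_order_eq eqW ord].
Qed.
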